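(* Let $(V,\varphi,\xi,\eta,g)$, $\mathcal{F}$, $G$, $p_1,\dots,p_4$ and the inner product $\langle\cdot,\cdot\rangle$ be as in the context, and let $W_i=\mathrm{Im}\,p_i$ ($i=1,2,3,4$). Then $\mathcal{F}=W_1\oplus W_2\oplus W_3\oplus W_4$, the subspaces $W_i$ are mutually orthogonal with respect to $\langle\cdot,\cdot\rangle$, and each $W_i$ is invariant under the action of $G$.
   Context: Let $V$ be a real vector space of dimension $2n+1$ with an endomorphism $\varphi$, a vector $\xi$ and a linear form $\eta$ such that $\varphi\xi=0$, $\eta\circ\varphi=0$, $\eta(\xi)=1$, $\varphi^2=\mathrm{id}-\eta\otimes\xi$, and such that $\varphi$ restricted to $\mathbb{D}=\ker\eta$ has eigenvalues $\pm1$ with eigenspaces of equal dimension $n$. Let $g$ be a nondegenerate symmetric bilinear form on $V$ with $g(\varphi X,\varphi Y)=-g(X,Y)+\eta(X)\eta(Y)$; then $\eta(X)=g(X,\xi)$. Write $hX=X-\eta(X)\xi$. Fix a basis $\{e_1,\dots,e_{2n}\}$ of $\mathbb{D}$ and write $Y=Y^ie_i+\eta(Y)\xi$. Let $\mathcal{F}$ be the vector space of all $(0,3)$-tensors of the form $F(X,Y,Z)=Y^ig(\mathcal{A}_{e_i}X,Z)+\eta(Y)g(\mathcal{A}_\xi X,\varphi Z)$, where $\mathcal{A}_{e_i}:V\to V$ and $\mathcal{A}_\xi:V\to\mathbb{D}$ are linear maps satisfying for all $X$, $i,j$: $g(\mathcal{A}_{e_i}X,e_j)=-g(\mathcal{A}_{e_j}X,e_i)$;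 $\mathcal{A}_{\varphi e_i}X=-\varphi(\mathcal{A}_{e_i}X)-g(\mathcal{A}_\xi X,e_i)\xi$ (index extended linearly); $\eta(\mathcal{A}_{e_i}X)=-g(\mathcal{A}_\xi X,\varphi e_i)$; $\eta(\mathcal{A}_\xi X)=0$. The inner product on $\mathcal{F}$ is $\langle F_1,F_2\rangle=g^{aq}g^{br}g^{cs}F_1(f_a,f_b,f_c)F_2(f_q,f_r,f_s)$ for any basis $\{f_1,\dots,f_{2n+1}\}$ of $V$, $(g^{ab})$ the inverse of $(g(f_a,f_b))$. Let $G$ be the group of linear automorphisms $a$ of $V$ with $a\varphi=\varphi a$, $a\xi=\xi$, $\eta\circ a=\eta$, $g(aX,aY)=g(X,Y)$, acting on $\mathcal{F}$ by $(\lambda(a)F)(X,Y,Z)=F(a^{-1}X,a^{-1}Y,a^{-1}Z)$. Define $p_1(F)(X,Y,Z)=F(hX,hY,hZ)$; $p_2(F)(X,Y,Z)=-\eta(Y)F(hX,hZ,\xi)+\eta(Z)F(hX,hY,\xi)$; $p_3(F)(X,Y,Z)=\eta(X)F(\xi,hY,hZ)$; $p_4(F)(X,Y,Z)=\eta(X)\eta(Y)F(\xi,\xi,hZ)-\eta(X)\eta(Z)F(\xi,\xi,hY)$. *)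

From mathcomp Require Import all_boot all_order all_algebra.
From mathcomp Require Import reals.
Set Implicit Arguments. Unset Strict Implicit. Unset Printing Implicit Defensive.
Import Order.TTheory GRing.Theory Num.Theory.
Local Open Scope ring_scope.

Section Defs.
Variables (R : realType) (m : nat).
Notation V := 'rV[R]_m.

(* Row-vector convention: a linear map with matrix M sends X to X *m M. *)
(* phi X := X *m Phi ; eta X := (X *m eta) 0 0 ; g(X,Y) := (X *m Gm *m Y^T) 0 0 *)
Definition etaf (eta : 'cV[R]_m) (X : V) : R := (X *m eta) 0 0.
Definition gf (Gm : 'M[R]_m) (X Y : V) : R := (X *m Gm *m Y^T) 0 0.
Definition hmap (xi : V) (eta : 'cV[R]_m) (X : V) : V := X - etaf eta X *: xi.

Definition tensor := V -> V -> V -> R.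

(* The space \mathcal{F}.  A Y is the matrix of \mathcal{A}_Y for Y in D
   (linear in Y: the linear extension of i |-> \mathcal{A}_{e_i});
   Axi is the matrix of \mathcal{A}_\xi. *)
Definition inF (Phi : 'M[R]_m) (xi : V) (eta : 'cV[R]_m) (Gm : 'M[R]_m)
  (F : tensor) : Prop :=
  exists (A : V -> 'M[R]_m) (Axi : 'M[R]_m),
    [/\ forall (c : R) (Y Z : V), A (c *: Y + Z) = c *: A Y + A Z,
        forall X Y Z : V, etaf eta Y = 0 -> etaf eta Z = 0 ->
          gf Gm (X *m A Y) Z = - gf Gm (X *m A Z) Y,
        forall X Y : V, etaf eta Y = 0 ->
          X *m A (Y *m Phi) = - ((X *m A Y) *m Phi) - gf Gm (X *m Axi) Y *: xi,
        forall X Y : V, etaf eta Y = 0 ->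
          etaf eta (X *m A Y) = - gf Gm (X *m Axi) (Y *m Phi)
      & forall X : V, etaf eta (X *m Axi) = 0]
    /\ F = fun X Y Z => gf Gm (X *m A (hmap xi eta Y)) Z
                         + etaf eta Y * gf Gm (X *m Axi) (Z *m Phi).

Definition tip (Gm : 'M[R]_m) (F1 F2 : tensor) : R :=
  let Gi := invmx Gm in
  let f := fun a : 'I_m => (delta_mx 0 a : V) in
  \sum_(a < m) \sum_(b < m) \sum_(c < m) \sum_(q < m) \sum_(r < m) \sum_(s < m)
    Gi a q * Gi b r * Gi c s * F1 (f a) (f b) (f c) * F2 (f q) (f r) (f s).

Definition inG (Phi : 'M[R]_m) (xi : V) (eta : 'cV[R]_m) (Gm : 'M[R]_m)
  (a : 'M[R]_m) : Prop :=
  [/\ a \in unitmx,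
      forall X : V, (X *m a) *m Phi = (X *m Phi) *m a,
      xi *m a = xi,
      forall X : V, etaf eta (X *m a) = etaf eta X
    & forall X Y : V, gf Gm (X *m a) (Y *m a) = gf Gm X Y].

Definition lam (a : 'M[R]_m) (F : tensor) : tensor :=
  fun X Y Z => F (X *m invmx a) (Y *m invmx a) (Z *m invmx a).

Definition p1 (xi : V) (eta : 'cV[R]_m) (F : tensor) : tensor :=
  fun X Y Z => F (hmap xi eta X) (hmap xi eta Y) (hmap xi eta Z).
Definition p2 (xi : V) (eta : 'cV[R]_m) (F : tensor) : tensor :=
  fun X Y Z => - etaf eta Y * F (hmap xi eta X) (hmap xi eta Z) xi
               + etaf eta Z * F (hmap xi eta X) (hmap xi eta Y) xi.
Definition p3 (xi : V) (eta : 'cV[R]_m) (F : tensor) : tensor :=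
  fun X Y Z => etaf eta X * F xi (hmap xi eta Y) (hmap xi eta Z).
Definition p4 (xi : V) (eta : 'cV[R]_m) (F : tensor) : tensor :=
  fun X Y Z => etaf eta X * etaf eta Y * F xi xi (hmap xi eta Z)
               - etaf eta X * etaf eta Z * F xi xi (hmap xi eta Y).

(* p i for i = 0,1,2,3 stands for p_1,...,p_4 *)
Definition pp (xi : V) (eta : 'cV[R]_m) (i : 'I_4) : tensor -> tensor :=
  match val i with
  | 0 => p1 xi eta | 1 => p2 xi eta | 2 => p3 xi eta | _ => p4 xi eta
  end.

Definition inW (Phi : 'M[R]_m) (xi : V) (eta : 'cV[R]_m) (Gm : 'M[R]_m)
  (i : 'I_4) (F : tensor) : Prop :=
  exists F0, inF Phi xi eta Gm F0 /\ F = pp xi eta i F0.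

End Defs.

(* Splitting every argument along V = D + R xi, X = h X + eta(X) xi, expands a
   trilinear tensor into eight pieces; when F(X, xi, Z) = - F(X, Z, xi), as for
   every element of F, they regroup into p_1 F + ... + p_4 F, and on trilinear
   tensors the p_i are complementary idempotents, whence the direct sum.  The p_i
   are told apart by two tests: is the first slot horizontal (p_1, p_2), are the
   last two slots horizontal (p_1, p_3)?  Since h is self-adjoint for the
   contraction with g^-1, <T1 o h, T2> = <T1, T2 o h> slot by slot, so images
   separated by a test are orthogonal.  Each p_i maps F into itself by an explicit
   choice of the maps A, and G fixes xi and eta, so it commutes with h and every
   p_i and preserves the identities defining F. *)

From HB Require Import structures.
From mathcomp Require Import all_boot all_order all_algebra.
From mathcomp Require Import reals ring lra.
From Stdlib Require Import FunctionalExtensionality.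
Set Implicit Arguments. Unset Strict Implicit. Unset Printing Implicit Defensive.
Import Order.TTheory GRing.Theory Num.Theory.
Local Open Scope ring_scope.

Lemma linear_for0 (R : pzRingType) (U : lmodType R) (W : zmodType)
    (s : GRing.Scale.law R W) (f : U -> W) :
  linear_for s f -> f 0 = 0.
Proof. by move=> Lf; rewrite -(subrr (0 : U)) (zmod_morphism_linear Lf) subrr. Qed.

Lemma scalar_sum (R : comPzRingType) (U : lmodType R) (I : finType) (f : U -> R)
    (u : I -> R) (v : I -> U) :
  scalar f -> f (\sum_i u i *: v i) = \sum_i u i * f (v i).
Proof.
move=> Lf; have [fZ fD] := GRing.semilinear_linear Lf.
rewrite (big_morph f fD (linear_for0 Lf)); apply: eq_bigr => i _; exact: fZ.
Qed.

Lemma tensor_ext (R : realType) (m : nat) (T T' : tensor R m) :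
  (forall X Y Z, T X Y Z = T' X Y Z) -> T = T'.
Proof.
by move=> E; do 3![apply: functional_extensionality => ?]; exact: E.
Qed.

Lemma mul_mx11 (R : pzRingType) (m : nat) (u : 'M[R]_1) (v : 'rV[R]_m) :
  u *m v = u 0 0 *: v.
Proof. by rewrite {1}[u]mx11_scalar mul_scalar_mx. Qed.

Lemma mx_rV_ext (R : pzRingType) (m : nat) (M N : 'M[R]_m) :
  (forall X : 'rV[R]_m, X *m M = X *m N) -> M = N.
Proof. by move=> e; apply/row_matrixP => i; rewrite !rowE e. Qed.

Ltac case_pp i := case: i => [[|[|[|[|?]]]] ?] //.

Section Projections.
Variables (R : realType) (m : nat) (xi : 'rV[R]_m) (eta : 'cV[R]_m).
Hypothesis eta_xi : etaf eta xi = 1.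

Local Notation V := 'rV[R]_m.
Local Notation et := (etaf eta).
Local Notation h := (hmap xi eta).
Local Notation pp := (pp xi eta).

Lemma etaf_is_scalar : scalar et.
Proof. by move=> c X Y; rewrite /etaf mulmxDl -scalemxAl !mxE. Qed.
HB.instance Definition _ := GRing.isLinear.Build R V R *%R et etaf_is_scalar.

Lemma hmap_is_linear : linear h.
Proof.
move=> c X Y; rewrite /hmap linearP scalerDl -scalerA scalerBr.
by rewrite opprD addrACA.
Qed.
HB.instance Definition _ := GRing.isLinear.Build R V V *:%R h hmap_is_linear.

Lemma etaf_hmap X : et (h X) = 0.
Proof. by rewrite /hmap linearB linearZ /= eta_xi mulr1 subrr. Qed.

Lemma hmap_xi : h xi = 0.
Proof. by rewrite /hmap eta_xi scale1r subrr. Qed.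

Lemma hmap_eta0 X : et X = 0 -> h X = X.
Proof. by move=> e; rewrite /hmap e scale0r subr0. Qed.

Lemma hmap_idem X : h (h X) = h X.
Proof. exact/hmap_eta0/etaf_hmap. Qed.

Lemma hmap_split X : X = et X *: xi + h X.
Proof. by rewrite /hmap addrC subrK. Qed.

Definition trilinear (T : tensor R m) :=
  [/\ forall c X X' Y Z, T (c *: X + X') Y Z = c * T X Y Z + T X' Y Z,
      forall c X Y Y' Z, T X (c *: Y + Y') Z = c * T X Y Z + T X Y' Z
    & forall c X Y Z Z', T X Y (c *: Z + Z') = c * T X Y Z + T X Y Z'].

Lemma trilinear0 T : trilinear T ->
  [/\ forall Y Z, T 0 Y Z = 0, forall X Z, T X 0 Z = 0 & forall X Y, T X Y 0 = 0].
Proof.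
case=> l1 l2 l3; split=> [Y Z|X Z|X Y].
- exact: (@linear_for0 _ _ _ _ (fun X => T X Y Z) (fun c X X' => l1 c X X' Y Z)).
- exact: (@linear_for0 _ _ _ _ (fun Y => T X Y Z) (fun c Y Y' => l2 c X Y Y' Z)).
- exact: (@linear_for0 _ _ _ _ (fun Z => T X Y Z) (fun c Z Z' => l3 c X Y Z Z')).
Qed.

Definition xi_skew (T : tensor R m) := forall X Z, T X xi Z = - T X Z xi.

Lemma pp_trilinear i T : trilinear T -> trilinear (pp i T).
Proof.
case=> l1 l2 l3; case_pp i; split=> c *;
  rewrite /pp /= /p1 /p2 /p3 /p4 ?linearP ?l1 ?l2 ?l3 /=; ring.
Qed.

Lemma pp_comp i j T : trilinear T ->
  pp i (pp j T) = if i == j then pp j T else (fun _ _ _ => 0).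
Proof.
case/trilinear0 => T1 T2 T3.
case_pp i; case_pp j; apply: tensor_ext => X Y Z;
  rewrite /pp /= /p1 /p2 /p3 /p4 ?etaf_hmap ?hmap_idem ?hmap_xi ?eta_xi ?T1 ?T2 ?T3; ring.
Qed.

Lemma pp_sum (I : finType) i (T : I -> tensor R m) :
  pp i (fun X Y Z => \sum_k T k X Y Z) = fun X Y Z => \sum_k pp i (T k) X Y Z.
Proof.
case_pp i; apply: tensor_ext => X Y Z; rewrite /pp /= /p1 /p2 /p3 /p4 //.
- by rewrite !mulr_sumr -big_split.
- by rewrite !mulr_sumr.
- by rewrite !mulr_sumr -sumrB.
Qed.

Lemma tensor_decomposition T : trilinear T -> xi_skew T ->
  T = fun X Y Z => \sum_(i < 4) pp i T X Y Z.
Proof.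
case=> l1 l2 l3 skewT; have skew0 W : T W xi xi = 0 by have := skewT W xi; lra.
apply: tensor_ext => X Y Z; rewrite !big_ord_recl big_ord0 /pp /= /p1 /p2 /p3 /p4.
rewrite {1}(hmap_split X) {1}(hmap_split Y) {1}(hmap_split Z) !l1 !l2 !l3 !skew0 !skewT.
ring.
Qed.

Lemma pp0 i : pp i (fun _ _ _ => 0) = fun _ _ _ => 0.
Proof. by case_pp i; apply: tensor_ext => X Y Z; rewrite /pp /= /p1 /p2 /p3 /p4; ring. Qed.

Lemma pp_direct (Fs : 'I_4 -> tensor R m) :
  (forall i, exists2 T, trilinear T & Fs i = pp i T) ->
  (fun X Y Z => \sum_i Fs i X Y Z) = (fun _ _ _ => 0) ->
  forall i, Fs i = fun _ _ _ => 0.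
Proof.
move=> FsP Fs0 i.
have ppFs k : pp i (Fs k) = if i == k then Fs k else fun _ _ _ => 0.
  by have [T trT ->] := FsP k; rewrite pp_comp.
have := congr1 (pp i) Fs0; rewrite pp_sum pp0 => <-; apply: tensor_ext => X Y Z.
rewrite (bigD1 i) //= ppFs eqxx big1 ?addr0 // => k ki.
by rewrite ppFs eq_sym (negbTE ki).
Qed.

Definition hor1 (T : tensor R m) : tensor R m := fun X Y Z => T (h X) Y Z.
Definition hor23 (T : tensor R m) : tensor R m := fun X Y Z => T X (h Y) (h Z).

Lemma hor1_trilinear T : trilinear T -> trilinear (hor1 T).
Proof. by case=> l1 l2 l3; split=> *; rewrite /hor1 ?linearP ?l1 ?l2 ?l3. Qed.

Lemma hor23_trilinear T : trilinear T -> trilinear (hor23 T).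
Proof. by case=> l1 l2 l3; split=> *; rewrite /hor23 ?linearP ?l1 ?l2 ?l3. Qed.

Lemma hor1_pp i T : hor1 (pp i T) = if (i < 2)%N then pp i T else fun _ _ _ => 0.
Proof.
case_pp i; apply: tensor_ext => X Y Z;
  rewrite /hor1 /pp /= /p1 /p2 /p3 /p4 ?hmap_idem ?etaf_hmap; ring.
Qed.

Lemma hor23_pp i T : hor23 (pp i T) = if ~~ odd i then pp i T else fun _ _ _ => 0.
Proof.
case_pp i; apply: tensor_ext => X Y Z;
  rewrite /hor23 /pp /= /p1 /p2 /p3 /p4 ?hmap_idem ?etaf_hmap; ring.
Qed.

End Projections.

Section InnerProduct.
Variables (R : realType) (m : nat) (xi : 'rV[R]_m) (eta : 'cV[R]_m) (Gm : 'M[R]_m).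
Hypothesis eta_xi : etaf eta xi = 1.
Hypothesis Gm_sym : Gm^T = Gm.
Hypothesis Gm_unit : Gm \in unitmx.
Hypothesis gf_xi : forall X, gf Gm X xi = etaf eta X.

Local Notation V := 'rV[R]_m.
Local Notation et := (etaf eta).
Local Notation h := (hmap xi eta).
Local Notation pp := (pp xi eta).
Local Notation tip := (tip Gm).

Definition basis_vec (a : 'I_m) : V := delta_mx 0 a.
Definition dual_vec (a : 'I_m) : V := basis_vec a *m invmx Gm.
Local Notation e := basis_vec.
Local Notation d := dual_vec.

Lemma dual_vec_sum a : d a = \sum_q invmx Gm a q *: e q.
Proof.
rewrite {1}(row_sum_delta (d a)); apply: eq_bigr => q _.
by rewrite /dual_vec /basis_vec -rowE mxE.
Qed.

Lemma tipE T1 T2 : trilinear T2 ->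
  tip T1 T2 = \sum_a \sum_b \sum_c T1 (e a) (e b) (e c) * T2 (d a) (d b) (d c).
Proof.
case=> l1 l2 l3; apply: eq_bigr => a _; apply: eq_bigr => b _; apply: eq_bigr => c _.
rewrite (dual_vec_sum a) (scalar_sum _ _ (fun k X X' => l1 k X X' _ _)) big_distrr.
apply: eq_bigr => q _ /=.
rewrite (dual_vec_sum b) (scalar_sum _ _ (fun k Y Y' => l2 k _ Y Y' _)) big_distrr mulr_sumr.
apply: eq_bigr => r _ /=.
rewrite (dual_vec_sum c) (scalar_sum _ _ (fun k Z Z' => l3 k _ _ Z Z')) !mulr_sumr.
by apply: eq_bigr => s _ /=; ring.
Qed.

Lemma etaf_basis_vec a : et (e a) = eta a 0.
Proof. by rewrite /etaf -rowE mxE. Qed.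

Lemma Gm_mul_xi : Gm *m xi^T = eta.
Proof.
apply/matrixP => i j.
by rewrite ord1 -etaf_basis_vec -gf_xi /gf /basis_vec -mulmxA -rowE [RHS]mxE.
Qed.

Lemma etaf_dual_vec a : et (d a) = xi 0 a.
Proof.
by rewrite /etaf /dual_vec -mulmxA -Gm_mul_xi mulKmx // /basis_vec -rowE !mxE.
Qed.

Lemma sum_etaf_dual_vec : \sum_a eta a 0 *: d a = xi.
Proof.
have -> : \sum_a eta a 0 *: d a = eta^T *m invmx Gm.
  rewrite [eta^T]row_sum_delta mulmx_suml; apply: eq_bigr => a _.
  by rewrite mxE -scalemxAl.
by apply: trmx_inj; rewrite trmx_mul trmxK trmx_inv Gm_sym -Gm_mul_xi mulKmx.
Qed.

Lemma contract_hmap (k : V -> V -> R) :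
  (forall Y, scalar (k^~ Y)) -> (forall X, scalar (k X)) ->
  \sum_a k (h (e a)) (d a) = \sum_a k (e a) (h (d a)).
Proof.
move=> kl kr; rewrite /hmap.
under eq_bigr do rewrite (zmod_morphism_linear (kl _)) (GRing.scalable_linear (kl _)).
under [RHS]eq_bigr do rewrite (zmod_morphism_linear (kr _)) (GRing.scalable_linear (kr _)).
rewrite !sumrB /=; congr (_ - _).
under eq_bigr do rewrite etaf_basis_vec.
under [RHS]eq_bigr do rewrite etaf_dual_vec.
rewrite -(scalar_sum _ _ (kl xi)) -row_sum_delta.
by rewrite -(scalar_sum _ _ (kr xi)) sum_etaf_dual_vec.
Qed.

Lemma tip_hor1 T1 T2 : trilinear T1 -> trilinear T2 ->
  tip (hor1 xi eta T1) T2 = tip T1 (hor1 xi eta T2).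
Proof.
move=> tr1 tr2; rewrite tipE // [RHS]tipE; last exact: hor1_trilinear.
rewrite exchange_big [RHS]exchange_big; apply: eq_bigr => b _.
rewrite exchange_big [RHS]exchange_big; apply: eq_bigr => c _.
have [l1 _ _] := tr1; have [l1' _ _] := tr2.
apply: (contract_hmap (k := fun X Y => T1 X (e b) (e c) * T2 Y (d b) (d c))).
- by move=> Y x X X'; rewrite /= l1 mulrDl mulrA.
- by move=> X x Y Y'; rewrite /= l1' mulrDr mulrCA.
Qed.

Lemma tip_hor23 T1 T2 : trilinear T1 -> trilinear T2 ->
  tip (hor23 xi eta T1) T2 = tip T1 (hor23 xi eta T2).
Proof.
move=> tr1 tr2; rewrite tipE // [RHS]tipE; last exact: hor23_trilinear.
have [_ l2 l3] := tr1; have [_ l2' l3'] := tr2.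
apply: eq_bigr => a _; transitivity (\sum_b \sum_c
    T1 (e a) (h (e b)) (e c) * T2 (d a) (d b) (h (d c))).
  apply: eq_bigr => b _.
  apply: (contract_hmap (k := fun X Y => T1 (e a) (h (e b)) X * T2 (d a) (d b) Y)).
  - by move=> Y x X X'; rewrite /= l3 mulrDl mulrA.
  - by move=> X x Y Y'; rewrite /= l3' mulrDr mulrCA.
rewrite exchange_big [RHS]exchange_big; apply: eq_bigr => c _.
apply: (contract_hmap (k := fun X Y => T1 (e a) X (e c) * T2 (d a) Y (h (d c)))).
- by move=> Y x X X'; rewrite /= l2 mulrDl mulrA.
- by move=> X x Y Y'; rewrite /= l2' mulrDr mulrCA.
Qed.

Lemma tip0l T : tip (fun _ _ _ => 0) T = 0.
Proof. by rewrite /tip; do 6!(apply: big1 => ? _); rewrite mulr0 mul0r. Qed.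

Lemma tip0r T : tip T (fun _ _ _ => 0) = 0.
Proof. by rewrite /tip; do 6!(apply: big1 => ? _); rewrite mulr0. Qed.

Lemma tip_separated (Q : tensor R m -> tensor R m) (s : 'I_4 -> bool) i j T T' :
  (forall T1 T2, trilinear T1 -> trilinear T2 -> tip (Q T1) T2 = tip T1 (Q T2)) ->
  (forall k T, Q (pp k T) = if s k then pp k T else fun _ _ _ => 0) ->
  trilinear T -> trilinear T' -> s i != s j -> tip (pp i T) (pp j T') = 0.
Proof.
move=> Qadj Qpp tr tr'; have tr_i := pp_trilinear xi eta i tr.
have tr_j := pp_trilinear xi eta j tr'.
case: (boolP (s i)) => si sij.
- have sj : s j = false by case: (s j) sij.
  have Qi : Q (pp i T) = pp i T by rewrite Qpp si.
  by rewrite -Qi Qadj // Qpp sj tip0r.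
- have sj : s j = true by case: (s j) sij.
  have Qj : Q (pp j T') = pp j T' by rewrite Qpp sj.
  by rewrite -Qj -Qadj // Qpp (negbTE si) tip0l.
Qed.

Lemma tip_pp i j T T' : trilinear T -> trilinear T' -> i != j ->
  tip (pp i T) (pp j T') = 0.
Proof.
move=> tr tr' ij; case: (boolP ((i < 2)%N != (j < 2)%N)) => [|same].
  exact: (tip_separated tip_hor1 (hor1_pp eta_xi)).
apply: (tip_separated tip_hor23 (hor23_pp eta_xi)) => //.
by move: ij same; case_pp i; case_pp j.
Qed.

End InnerProduct.

Section TensorSpace.
Variables (R : realType) (m : nat).
Variables (Phi : 'M[R]_m) (xi : 'rV[R]_m) (eta : 'cV[R]_m) (Gm : 'M[R]_m).

Local Notation V := 'rV[R]_m.
Local Notation et := (etaf eta).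
Local Notation g := (gf Gm).
Local Notation h := (hmap xi eta).
Local Notation pp := (pp xi eta).
Local Notation inF := (inF Phi xi eta Gm).

Lemma gf_is_bilinear : bilinear_for *%R *%R g.
Proof.
split=> [Y|X] c U U'; rewrite /gf.
- by rewrite mulmxDl -scalemxAl mulmxDl -scalemxAl !mxE.
- by rewrite linearP mulmxDr -scalemxAr !mxE.
Qed.
HB.instance Definition _ := bilinear_isBilinear.Build R V V R *%R *%R g gf_is_bilinear.

Hypothesis xi_Phi : xi *m Phi = 0.
Hypothesis etaf_Phi : forall X, et (X *m Phi) = 0.
Hypothesis Phi2 : forall X, X *m Phi *m Phi = X - et X *: xi.
Hypothesis eta_xi : et xi = 1.
Hypothesis Gm_sym : Gm^T = Gm.

Lemma gf_xi_of_compatible :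
  (forall X Y, g (X *m Phi) (Y *m Phi) = - g X Y + et X * et Y) ->
  forall X, g X xi = et X.
Proof.
by move=> g_Phi X; have := g_Phi X xi; rewrite xi_Phi linear0r eta_xi mulr1; lra.
Qed.

Hypothesis gf_xi : forall X, g X xi = et X.

Lemma gfC X Y : g X Y = g Y X.
Proof.
by rewrite /gf -[in LHS](trmxK (X *m Gm *m Y^T)) mxE !trmx_mul trmxK Gm_sym mulmxA.
Qed.

Lemma gf_xi_l X : g xi X = et X.
Proof. by rewrite gfC gf_xi. Qed.

Lemma gf_hmap X Y : g (h X) Y = g X (h Y).
Proof. by rewrite /hmap linearBl linearBr linearZl_LR linearZ /= gf_xi gf_xi_l mulrC. Qed.

Lemma hmap_mulPhi X : h X *m Phi = X *m Phi.
Proof. by rewrite /hmap mulmxBl -scalemxAl xi_Phi scaler0 subr0. Qed.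

Lemma mul_col_row (X W : V) : X *m (eta *m W) = et X *: W.
Proof. by rewrite mulmxA mul_mx11. Qed.

(* Locked, so that rewriting with [mulmxDr] and the like does not see through it. *)
Definition hmx : 'M[R]_m := locked (1%:M - eta *m xi).

Lemma mul_hmx X : X *m hmx = h X.
Proof. by rewrite /hmx -lock mulmxBr mulmx1 mul_col_row. Qed.

(* [inF F] unfolds to [exists A Axi, Faxioms A Axi /\ F = Ftensor A Axi]. *)
Definition Faxioms (A : V -> 'M[R]_m) (Axi : 'M[R]_m) : Prop :=
  [/\ forall (c : R) (Y Z : V), A (c *: Y + Z) = c *: A Y + A Z,
      forall X Y Z : V, et Y = 0 -> et Z = 0 -> g (X *m A Y) Z = - g (X *m A Z) Y,
      forall X Y : V, et Y = 0 ->
        X *m A (Y *m Phi) = - ((X *m A Y) *m Phi) - g (X *m Axi) Y *: xi,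
      forall X Y : V, et Y = 0 -> et (X *m A Y) = - g (X *m Axi) (Y *m Phi)
    & forall X : V, et (X *m Axi) = 0].

Definition Ftensor (A : V -> 'M[R]_m) (Axi : 'M[R]_m) : tensor R m :=
  fun X Y Z => g (X *m A (h Y)) Z + et Y * g (X *m Axi) (Z *m Phi).

Lemma Ftensor_xi_r A Axi X Y : Faxioms A Axi ->
  Ftensor A Axi X Y xi = - g (X *m Axi) (Y *m Phi).
Proof.
case=> _ _ _ A_eta _.
by rewrite /Ftensor gf_xi xi_Phi linear0r mulr0 addr0 A_eta ?etaf_hmap // hmap_mulPhi.
Qed.

Lemma Ftensor_xi_m A Axi X Z : Faxioms A Axi ->
  Ftensor A Axi X xi Z = g (X *m Axi) (Z *m Phi).
Proof.
case=> A_lin _ _ _ _.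
by rewrite /Ftensor hmap_xi // (linear_for0 A_lin) mulmx0 linear0l eta_xi mul1r add0r.
Qed.

Lemma Ftensor_trilinear A Axi : Faxioms A Axi -> trilinear (Ftensor A Axi).
Proof.
case=> A_lin _ _ _ _; split=> c *; rewrite /Ftensor.
- by rewrite !mulmxDl -!scalemxAl !linearPl /=; ring.
- by rewrite linearP A_lin mulmxDr -scalemxAr linearPl linearP /=; ring.
- by rewrite !mulmxDl -!scalemxAl !linearPr /=; ring.
Qed.

Lemma Ftensor_xi_skew A Axi : Faxioms A Axi -> xi_skew xi (Ftensor A Axi).
Proof. by move=> FA X Z; rewrite Ftensor_xi_m // Ftensor_xi_r // opprK. Qed.

Lemma hmap_Phi X : h (X *m Phi) = X *m Phi.
Proof. exact/hmap_eta0/etaf_Phi. Qed.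

Lemma hmap_oppPhi_xi W c : h (- (W *m Phi) - c *: xi) = - (W *m Phi).
Proof. by rewrite linearB linearN linearZ /= hmap_xi // scaler0 subr0 hmap_Phi. Qed.

Lemma inF_p1 A Axi : Faxioms A Axi -> inF (p1 xi eta (Ftensor A Axi)).
Proof.
case=> A_lin A_skew A_Phi A_eta A_xi.
exists (fun Y => hmx *m A (h Y) *m hmx), 0; split; first split.
- by move=> c Y Z; rewrite linearP A_lin mulmxDr mulmxDl -scalemxAr -scalemxAl.
- move=> X Y Z eY eZ; rewrite !mulmxA !mul_hmx !gf_hmap.
  by rewrite (hmap_eta0 xi eY) (hmap_eta0 xi eZ) A_skew.
- move=> X Y eY; rewrite mulmx0 linear0l scale0r subr0 !mulmxA !mul_hmx hmap_Phi.
  by rewrite (hmap_eta0 xi eY) A_Phi // hmap_oppPhi_xi hmap_mulPhi.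
- by move=> X Y eY; rewrite !mulmxA !mul_hmx etaf_hmap // mulmx0 linear0l oppr0.
- by move=> X; rewrite mulmx0 linear0.
apply: tensor_ext => X Y Z.
rewrite /p1 /Ftensor etaf_hmap // mul0r addr0 mulmx0 linear0l mulr0 addr0.
by rewrite !mulmxA !mul_hmx gf_hmap !hmap_idem.
Qed.

Definition Ap2 (Axi : 'M[R]_m) (Y : V) : 'M[R]_m :=
  - (hmx *m Axi *m Gm *m (Y *m Phi)^T *m xi).

Lemma mul_Ap2 Axi X Y : X *m Ap2 Axi Y = - (g (h X *m Axi) (Y *m Phi) *: xi).
Proof. by rewrite /Ap2 mulmxN !mulmxA mul_hmx mul_mx11. Qed.

Lemma inF_p2 A Axi : Faxioms A Axi -> inF (p2 xi eta (Ftensor A Axi)).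
Proof.
move=> FA; have [_ _ _ _ A_xi] := FA.
exists (Ap2 Axi), (hmx *m Axi); split; first split.
- move=> c Y Z; apply: mx_rV_ext => X.
  rewrite mulmxDr -scalemxAr !mul_Ap2 (mulmxDl (c *: Y)) -scalemxAl linearPr /=.
  by rewrite scalerDl scalerN scalerA opprD.
- move=> X Y Z eY eZ.
  by rewrite !mul_Ap2 !linearNl !linearZl_LR /= !gf_xi_l eY eZ !mulr0 !oppr0.
- move=> X Y eY; rewrite !mul_Ap2 Phi2 eY scale0r subr0 mulNmx -scalemxAl xi_Phi scaler0.
  by rewrite !oppr0 add0r mulmxA mul_hmx.
- by move=> X Y eY; rewrite mul_Ap2 linearN linearZ /= eta_xi mulr1 mulmxA mul_hmx.
- by move=> X; rewrite mulmxA mul_hmx A_xi.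
apply: tensor_ext => X Y Z.
rewrite /p2 !Ftensor_xi_r // /Ftensor mul_Ap2 mulmxA mul_hmx linearNl linearZl_LR /=.
by rewrite gf_xi_l !hmap_mulPhi; ring.
Qed.

Definition Ap3 (A : V -> 'M[R]_m) (Y : V) : 'M[R]_m := eta *m (xi *m A (h Y) *m hmx).

Lemma mul_Ap3 A X Y : X *m Ap3 A Y = et X *: h (xi *m A (h Y)).
Proof. by rewrite /Ap3 mul_col_row mul_hmx. Qed.

Lemma inF_p3 A Axi : Faxioms A Axi -> inF (p3 xi eta (Ftensor A Axi)).
Proof.
case=> A_lin A_skew A_Phi A_eta A_xi.
exists (Ap3 A), 0; split; first split.
- move=> c Y Z; apply: mx_rV_ext => X.
  rewrite mulmxDr -scalemxAr !mul_Ap3 linearP A_lin mulmxDr -scalemxAr linearP /=.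
  by rewrite scalerDr !scalerA mulrC.
- move=> X Y Z eY eZ; rewrite !mul_Ap3 !linearZl_LR /= !gf_hmap.
  by rewrite (hmap_eta0 xi eY) (hmap_eta0 xi eZ) A_skew // mulrN.
- move=> X Y eY; rewrite mulmx0 linear0l scale0r subr0 !mul_Ap3 hmap_Phi (hmap_eta0 xi eY).
  by rewrite A_Phi // hmap_oppPhi_xi -scalemxAl hmap_mulPhi scalerN.
- by move=> X Y eY; rewrite mul_Ap3 linearZ /= etaf_hmap // mulr0 mulmx0 linear0l oppr0.
- by move=> X; rewrite mulmx0 linear0.
apply: tensor_ext => X Y Z.
rewrite /p3 /Ftensor etaf_hmap // mul0r addr0 mulmx0 linear0l mulr0 addr0 mul_Ap3.
by rewrite linearZl_LR /= gf_hmap !hmap_idem.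
Qed.

Definition Ap4 (Axi : 'M[R]_m) (Y : V) : 'M[R]_m :=
  - (eta *m (xi *m Axi *m Gm *m (Y *m Phi)^T *m xi)).

Lemma mul_Ap4 Axi X Y : X *m Ap4 Axi Y = - ((et X * g (xi *m Axi) (Y *m Phi)) *: xi).
Proof. by rewrite /Ap4 mulmxN mul_col_row mul_mx11 scalerA. Qed.

Lemma inF_p4 A Axi : Faxioms A Axi -> inF (p4 xi eta (Ftensor A Axi)).
Proof.
move=> FA; have [_ _ _ _ A_xi] := FA.
exists (Ap4 Axi), (eta *m (xi *m Axi)); split; first split.
- move=> c Y Z; apply: mx_rV_ext => X.
  rewrite mulmxDr -scalemxAr !mul_Ap4 (mulmxDl (c *: Y)) -scalemxAl linearPr /=.
  by rewrite mulrDr scalerDl opprD scalerN scalerA mulrCA.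
- move=> X Y Z eY eZ.
  by rewrite !mul_Ap4 !linearNl !linearZl_LR /= !gf_xi_l eY eZ !mulr0 !oppr0.
- move=> X Y eY; rewrite !mul_Ap4 Phi2 eY scale0r subr0 mulNmx -scalemxAl xi_Phi scaler0.
  by rewrite !oppr0 add0r mul_col_row linearZl_LR.
- move=> X Y eY.
  by rewrite mul_Ap4 linearN linearZ /= eta_xi mulr1 mul_col_row linearZl_LR.
- by move=> X; rewrite mul_col_row linearZ /= A_xi mulr0.
apply: tensor_ext => X Y Z.
rewrite /p4 !Ftensor_xi_m // /Ftensor mul_Ap4 mul_col_row linearNl !linearZl_LR /=.
by rewrite gf_xi_l !hmap_mulPhi; ring.
Qed.

Lemma inF_pp i F : inF F -> inF (pp i F).
Proof.
case=> A [Axi [FA ->]]; case_pp i.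
- exact: inF_p1.
- exact: inF_p2.
- exact: inF_p3.
- exact: inF_p4.
Qed.

Lemma inF_trilinear F : inF F -> trilinear F.
Proof. by case=> A [Axi [FA ->]]; apply: Ftensor_trilinear. Qed.

Lemma inF_xi_skew F : inF F -> xi_skew xi F.
Proof. by case=> A [Axi [FA ->]]; apply: Ftensor_xi_skew. Qed.

Section Invariance.
Variable a : 'M[R]_m.
Hypothesis a_G : inG Phi xi eta Gm a.
Local Notation b := (invmx a).

Lemma mulmx_invK (X : V) : X *m b *m a = X.
Proof. by case: a_G => a_unit _ _ _ _; rewrite mulmxKV. Qed.

Lemma etaf_inv (X : V) : et (X *m b) = et X.
Proof. by case: a_G => _ _ _ eta_a _; rewrite -{2}(mulmx_invK X) eta_a. Qed.

Lemma xi_inv : xi *m b = xi.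
Proof. by case: a_G => a_unit _ xi_a _ _; rewrite -{1}xi_a mulmxK. Qed.

Lemma hmap_inv (X : V) : h (X *m b) = h X *m b.
Proof. by rewrite /hmap mulmxBl -scalemxAl xi_inv etaf_inv. Qed.

Lemma Phi_inv (X : V) : X *m b *m Phi = X *m Phi *m b.
Proof.
case: a_G => a_unit Phi_a _ _ _.
by rewrite -[X *m b *m Phi](mulmxK a_unit) -Phi_a mulmx_invK.
Qed.

Lemma gf_inv_r (U Z : V) : g U (Z *m b) = g (U *m a) Z.
Proof. by case: a_G => _ _ _ _ g_a; rewrite -g_a mulmx_invK. Qed.

Lemma inF_lam F : inF F -> inF (lam a F).
Proof.
case=> A [Axi [[A_lin A_skew A_Phi A_eta A_xi] ->]].
exists (fun Y => b *m A (Y *m b) *m a), (b *m Axi *m a); split; first split.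
- move=> c Y Z; apply: mx_rV_ext => X.
  by rewrite mulmxDl -scalemxAl A_lin mulmxDr mulmxDl -scalemxAr -scalemxAl.
- by move=> X Y Z eY eZ; rewrite !mulmxA -!gf_inv_r A_skew ?etaf_inv.
- move=> X Y eY; rewrite !mulmxA -Phi_inv A_Phi ?etaf_inv // mulmxBl mulNmx -scalemxAl.
  case: a_G => _ Phi_a xi_a _ _.
  by rewrite xi_a Phi_a gf_inv_r.
- move=> X Y eY; case: a_G => _ _ _ eta_a _.
  by rewrite !mulmxA eta_a A_eta ?etaf_inv // Phi_inv gf_inv_r.
- by move=> X; case: a_G => _ _ _ eta_a _; rewrite !mulmxA eta_a A_xi.
apply: tensor_ext => X Y Z.
by rewrite /lam hmap_inv gf_inv_r etaf_inv Phi_inv gf_inv_r !mulmxA.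
Qed.

Lemma lam_pp i F : lam a (pp i F) = pp i (lam a F).
Proof.
case_pp i; apply: tensor_ext => X Y Z;
  by rewrite /lam /pp /= /p1 /p2 /p3 /p4 ?hmap_inv ?etaf_inv ?xi_inv.
Qed.

End Invariance.

End TensorSpace.

Theorem proposition2p1 (R : realType) (n : nat)
  (Phi : 'M[R]_((2 * n).+1)) (xi : 'rV[R]_((2 * n).+1)) (eta : 'cV[R]_((2 * n).+1))
  (Gm : 'M[R]_((2 * n).+1)) :
  xi *m Phi = 0 ->
  (forall X : 'rV[R]_((2 * n).+1), etaf eta (X *m Phi) = 0) ->
  etaf eta xi = 1 ->
  (forall X : 'rV[R]_((2 * n).+1), (X *m Phi) *m Phi = X - etaf eta X *: xi) ->
  (forall a : R, (eigenspace Phi a :&: kermx eta)%MS != 0 -> a = 1 \/ a = -1) ->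
  \rank (eigenspace Phi 1 :&: kermx eta)%MS = n ->
  \rank (eigenspace Phi (-1) :&: kermx eta)%MS = n ->
  Gm^T = Gm -> Gm \in unitmx ->
  (forall X Y : 'rV[R]_((2 * n).+1),
     gf Gm (X *m Phi) (Y *m Phi) = - gf Gm X Y + etaf eta X * etaf eta Y) ->
  [/\ forall (i : 'I_4) F, inW Phi xi eta Gm i F -> inF Phi xi eta Gm F,
      forall F, inF Phi xi eta Gm F ->
        exists Fs : 'I_4 -> tensor R (2 * n).+1,
          (forall i, inW Phi xi eta Gm i (Fs i)) /\
          F = (fun X Y Z => \sum_(i < 4) Fs i X Y Z),
      forall Fs : 'I_4 -> tensor R (2 * n).+1,
        (forall i, inW Phi xi eta Gm i (Fs i)) ->
        (fun X Y Z => \sum_(i < 4) Fs i X Y Z) = (fun _ _ _ => 0) ->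
        forall i, Fs i = (fun _ _ _ => 0),
      forall (i j : 'I_4) F1 F2, i != j ->
        inW Phi xi eta Gm i F1 -> inW Phi xi eta Gm j F2 -> tip Gm F1 F2 = 0
    & forall (i : 'I_4) (a : 'M[R]_((2 * n).+1)) F,
        inG Phi xi eta Gm a -> inW Phi xi eta Gm i F ->
        inW Phi xi eta Gm i (lam a F)].
Proof.
move=> xi_Phi etaf_Phi eta_xi Phi2 _ _ _ Gm_sym Gm_unit g_Phi.
have gf_xi := gf_xi_of_compatible xi_Phi eta_xi g_Phi.
split.
- by move=> i F [T [TF ->]]; apply: inF_pp.
- move=> F FF; exists (pp xi eta ^~ F); split=> [i|]; first by exists F.
  exact: tensor_decomposition (inF_trilinear FF) (inF_xi_skew xi_Phi eta_xi gf_xi FF).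
- move=> Fs Fs_W; apply: (pp_direct eta_xi) => i.
  by have [T [TF ->]] := Fs_W i; exists T => //; apply: inF_trilinear TF.
- move=> i j F1 F2 ij [T [TF ->]] [T' [T'F ->]].
  exact: (tip_pp eta_xi Gm_sym Gm_unit gf_xi (inF_trilinear TF) (inF_trilinear T'F) ij).
- move=> i a F aG [T [TF ->]]; exists (lam a T).
  by split; [exact: (inF_lam aG TF) | exact: (lam_pp aG)].
Qed.
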